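(* Let $X\subset\mathbb{R}^n$ be a closed set which is the closure of its interior, $f:X\to\mathbb{R}^n$ locally Lipschitz, and suppose $\dot x=f(x)$ is forward complete with flow $\varphi_t$. Let $K$ be a closed convex cone with nonempty interior and suppose the system is strongly monotone in reversed time: for every $\xi_1,\xi_2\in X$ and every $t<0$ such that $\varphi_t(\xi_1),\varphi_t(\xi_2)$ are defined, $\xi_1\succ\xi_2$ implies $\varphi_t(\xi_1)\gg\varphi_t(\xi_2)$. Let $v\in\operatorname{int}(K)$, $|v|=1$, with $X$ invariant under translation by $v$ and $\varphi_t(\xi+\lambda v)=\varphi_t(\xi)+\lambda v$ for all $\lambda\in\mathbb{R}$, $\xi\in X$ and all $t$ at which $\varphi_t(\xi)$ is defined. Let $V(x)=\inf\{\alpha\in\mathbb{R}:x\preceq\alpha v\}$. Then for all $\xi_1,\xi_2\in X$ and all $t>0$, $$V(\varphi_t(\xi_1)-\varphi_t(\xi_2))\ge V(\xi_1-\xi_2),$$ and the inequality is strict whenever $\xi_1-\xi_2\notin\operatorname{span}\{v\}$.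
   Context: The cone $K$ satisfies $K+K\subset K$, $\alpha K\subset K$ for $\alpha\ge0$, $K\cap(-K)=\{0\}$. $\xi_1\succeq\xi_2$ iff $\xi_1-\xi_2\in K$; $\xi_1\succ\xi_2$ iff additionally $\xi_1\neq\xi_2$; $\xi_1\gg\xi_2$ iff $\xi_1-\xi_2\in\operatorname{int}(K)$. Forward complete means every solution is uniquely defined in $X$ on an interval containing $[0,\infty)$ in its interior. *)

From HB Require Import structures.
From mathcomp Require Import all_boot all_order all_algebra.
From mathcomp Require Import all_classical all_reals all_analysis.
Set Implicit Arguments. Unset Strict Implicit. Unset Printing Implicit Defensive.
Import Order.TTheory GRing.Theory Num.Theory.
Import numFieldNormedType.Exports.
Local Open Scope classical_set_scope.
Local Open Scope ring_scope.

Section Defs.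
Context {R : realType} {n : nat}.
Local Notation V := 'rV[R]_n.

Definition enorm (x : V) : R := Num.sqrt (\sum_(i < n) x ord0 i ^+ 2).

Definition closed_convex_cone (K : set V) : Prop :=
  [/\ closed K,
      (forall x y, K x -> K y -> K (x + y)),
      (forall (a : R) x, 0 <= a -> K x -> K (a *: x)),
      (forall x y (t : R), K x -> K y -> 0 <= t <= 1 -> K (t *: x + (1 - t) *: y))
    & (forall x, K x -> K (- x) -> x = 0)].

Definition cone_le (K : set V) (x y : V) : Prop := K (x - y).       (* x ⪰ y *)
Definition cone_lt (K : set V) (x y : V) : Prop := K (x - y) /\ x <> y. (* x ≻ y *)
Definition cone_ll (K : set V) (x y : V) : Prop := (interior K) (x - y). (* x ≫ y *)

Definition locally_lipschitz_on (X : set V) (f : V -> V) : Prop :=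
  forall x, X x -> exists r : R, exists L : R, 0 < r /\
    forall y z, X y -> X z -> `|y - x| < r -> `|z - x| < r ->
      `|f y - f z| <= L * `|y - z|.

Definition is_solution (X : set V) (f : V -> V) (I : set R) (x : R -> V) : Prop :=
  [/\ is_interval I,
      (forall s, I s -> X (x s)),
      {within I, continuous x}
    & (forall s, (interior I) s -> is_derive s 1 x (f (x s)))].

(** phi is the flow of the forward complete system x' = f(x) on X:
    dom xi is the maximal interval of existence of the (unique) solution
    through xi, and [0, +oo) lies in its interior. *)
Definition forward_complete_flow (X : set V) (f : V -> V)
    (phi : R -> V -> V) (dom : V -> set R) : Prop :=
  forall xi, X xi ->
  [/\ is_solution X f (dom xi) (fun t => phi t xi),
      phi 0 xi = xi,
      (forall t : R, 0 <= t -> (interior (dom xi)) t)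
    & (forall (J : set R) (y : R -> V), J 0 -> is_solution X f J y -> y 0 = xi ->
         forall t, J t -> dom xi t /\ y t = phi t xi)].

Definition Vfun (K : set V) (v : V) (x : V) : R :=
  inf [set alpha : R | cone_le K (alpha *: v) x].

End Defs.

(* Let [y_i = phi_t xi_i] and [b = V(y_1 - y_2)], so that [y_2 + b v ⪰ y_1].
   Flowing back for time [t] commutes with translation along [v], hence maps
   [y_2 + b v] to [xi_2 + b v].  Either [y_2 + b v = y_1], and then
   [xi_1 - xi_2 = b v], or [y_2 + b v ≻ y_1], and strong monotonicity in
   reversed time gives [xi_2 + b v ≫ xi_1], i.e. [V(xi_1 - xi_2) < b]. *)
From HB Require Import structures.
From mathcomp Require Import all_boot all_order all_algebra.
From mathcomp Require Import all_classical all_reals all_analysis.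
Import Order.TTheory GRing.Theory Num.Theory.
Import numFieldNormedType.Exports.
Local Open Scope classical_set_scope.
Local Open Scope ring_scope.
Set Implicit Arguments. Unset Strict Implicit. Unset Printing Implicit Defensive.

Lemma interior_addZ_mem (R : realType) (W : normedModType R) (K : set W) (w y : W) :
  (interior K) w -> exists2 c : R, 0 < c & K (w + c *: y).
Proof.
move=> Kw.
have cont : {for 0, continuous (fun s : R => w + s *: y)}.
  by apply: continuousD; [exact: cvg_cst | exact: continuousZr_tmp].
have /nbhs_ballP[e /= e0 ball_e] : nbhs (0 : R) ((fun s : R => w + s *: y) @^-1` K).
  by apply: cont; rewrite /= scale0r addr0.
exists (e / 2); first by rewrite divr_gt0.
apply: ball_e; rewrite /ball /= sub0r normrN gtr0_norm ?divr_gt0 //.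
by rewrite ltr_pdivrMr // ltr_pMr // ltr1n.
Qed.

Lemma is_derive_comp_shift (R : realType) (W : normedModType R) (F : R -> W)
    (s t : R) (d : W) :
  is_derive (s + t) 1 F d -> is_derive s 1 (fun u => F (u + t)) d.
Proof.
move=> [derF dF].
have quotE : (fun h : R => h^-1 *: (((fun u => F (u + t)) \o shift s) (h *: 1) - F (s + t)))
   = (fun h : R => h^-1 *: ((F \o shift (s + t)) (h *: 1) - F (s + t))).
  by apply/funext => h /=; rewrite addrA.
by split; rewrite /derivable /derive quotE.
Qed.

Section Flow.
Context {R : realType} {n : nat}.
Local Notation V := 'rV[R]_n.
Variables (X : set V) (f : V -> V) (phi : R -> V -> V) (dom : V -> set R).
Hypothesis flow : forward_complete_flow X f phi dom.

Lemma is_solution_flow_shift xi t : X xi -> 0 <= t ->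
  is_solution X f [set` `[-t, 0]] (fun u => phi (u + t) xi).
Proof.
move=> Xxi t_ge0; have [[_ X_phi _ der_phi] _ int_dom _] := flow Xxi.
have in_dom s : [set` `[-t, 0]] s -> (interior (dom xi)) (s + t).
  by rewrite /= in_itv /= => /andP[st _]; apply: int_dom; rewrite -lerBlDr sub0r.
have der s : [set` `[-t, 0]] s ->
    is_derive s 1 (fun u => phi (u + t) xi) (f (phi (s + t) xi)).
  by move=> /in_dom ?; apply: (@is_derive_comp_shift _ _ (fun u => phi u xi)); apply: der_phi.
split.
- exact: interval_is_interval.
- by move=> s /in_dom/interior_subset; apply: X_phi.
- by apply: derivable_within_continuous => s; rewrite inE => /der[].
- by move=> s /interior_subset; apply: der.
Qed.

Lemma flow_reverse xi t : X xi -> 0 <= t ->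
  [/\ X (phi t xi), dom (phi t xi) (- t) & phi (- t) (phi t xi) = xi].
Proof.
move=> Xxi t_ge0; have [[_ X_phi _ _] phi0 int_dom _] := flow Xxi.
have Xy : X (phi t xi) by apply: X_phi; apply: interior_subset; exact: int_dom.
have [_ _ _ uniq] := flow Xy.
have seg0 : [set` `[-t, 0]] 0 by rewrite /= in_itv /= lexx oppr_le0 andbT.
have seg_t : [set` `[-t, 0]] (- t) by rewrite /= in_itv /= lexx oppr_le0.
have start : (fun u => phi (u + t) xi) 0 = phi t xi by rewrite add0r.
have [dom_t flowE] := uniq _ _ seg0 (is_solution_flow_shift Xxi t_ge0) start _ seg_t.
by split => //; rewrite -flowE addNr phi0.
Qed.

End Flow.

Section Vfun.
Context {R : realType} {n : nat}.
Local Notation V := 'rV[R]_n.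
Variables (K : set V) (v : V).
Hypotheses (coneK : closed_convex_cone K) (Kv : (interior K) v) (v_neq0 : v != 0).

Let S x := [set a : R | cone_le K (a *: v) x].

Lemma cone0 : K 0.
Proof.
case: coneK => _ _ Kscale _ _; rewrite -(scale0r v).
by apply: Kscale => //; exact: interior_subset.
Qed.

Lemma Vfun_set_lbound x : has_lbound (S x).
Proof.
case: coneK => _ Kadd Kscale _ Kanti.
have [c c_gt0 Kc] := interior_addZ_mem x Kv.
exists (- c^-1) => a; rewrite /S /cone_le /= => Ka.
suff ca_ge0 : 0 <= c * a + 1.
  rewrite -(lerD2r c^-1) addNr.
  have -> : a + c^-1 = c^-1 * (c * a + 1).
    by rewrite mulrDr mulr1 mulrA mulVf ?mul1r // gt_eqF.
  by apply: mulr_ge0 => //; rewrite invr_ge0 ltW.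
rewrite leNgt; apply/negP => ca_lt0.
have Kcav : K ((c * a + 1) *: v).
  have -> : (c * a + 1) *: v = c *: (a *: v - x) + (v + c *: x).
    by rewrite scalerBr scalerA scalerDl scale1r addrA addrAC subrK addrC.
  by apply: Kadd => //; apply: Kscale => //; exact: ltW.
have Kmv : K (- v).
  have -> : - v = (- (c * a + 1))^-1 *: ((c * a + 1) *: v).
    by rewrite scalerA invrN mulNr mulVf ?scaleN1r // lt_eqF.
  by apply: Kscale => //; rewrite invr_ge0 oppr_ge0 ltW.
by move/eqP: v_neq0; apply; apply: Kanti => //; exact: interior_subset.
Qed.

Lemma Vfun_set_neq0 x : S x !=set0.
Proof.
case: coneK => _ _ Kscale _ _.
have [c c_gt0 Kc] := interior_addZ_mem (- x) Kv.
exists c^-1; rewrite /S /cone_le /=.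
have -> : c^-1 *: v - x = c^-1 *: (v + c *: - x).
  by rewrite scalerDr scalerA mulVf ?gt_eqF // scale1r.
by apply: Kscale => //; rewrite invr_ge0 ltW.
Qed.

Lemma Vfun_le x a : cone_le K (a *: v) x -> Vfun K v x <= a.
Proof. exact/ge_inf/Vfun_set_lbound. Qed.

(* The infimum is attained: [S x] is closed, being the preimage of [K] under a
   continuous map. *)
Lemma Vfun_mem x : cone_le K (Vfun K v x *: v) x.
Proof.
case: coneK => closedK _ _ _ _.
pose N := [set b : R | K ((- b) *: v - x)].
have NE : -%R @` S x = N.
  apply/seteqP; split => b; first by case=> a Sa <-; rewrite /N /= opprK.
  by move=> Nb; exists (- b); rewrite // opprK.
have closedN : closed N.
  apply: (@preimage_closed _ _ (fun b : R => (- b) *: v - x)) => // b _.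
  apply: cvgB; last exact: cvg_cst.
  by apply: cvgZr_tmp; apply: cvgN; exact: cvg_id.
have [l lbl] := Vfun_set_lbound x.
have N_neq0 : N !=set0.
  by rewrite -NE; case: (Vfun_set_neq0 x) => a Sa; exists (- a), a.
have ubN : has_ubound N.
  by exists (- l) => b Nb; rewrite lerNr; apply: lbl; rewrite /S /cone_le /=.
have := closure_sup N_neq0 ubN.
rewrite -(proj1 (closure_id N) closedN) /N /= => Nsup.
by rewrite /cone_le /Vfun /inf -/(S x) NE.
Qed.

Lemma Vfun_lt x a : (interior K) (a *: v - x) -> Vfun K v x < a.
Proof.
move=> Kax; have [c c_gt0 Kc] := interior_addZ_mem (- v) Kax.
apply: (@le_lt_trans _ _ (a - c)); last by rewrite ltrBlDr ltrDl.
apply: Vfun_le; rewrite /cone_le.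
by rewrite scalerBl -addrA [- _ - _]addrC addrA -scalerN.
Qed.

End Vfun.

Section ReversedTimeMonotone.
Context {R : realType} {n : nat}.
Local Notation V := 'rV[R]_n.
Variables (X : set V) (f : V -> V) (phi : R -> V -> V) (dom : V -> set R).
Variables (K : set V) (v : V).
Hypotheses (coneK : closed_convex_cone K) (Kv : (interior K) v) (v_neq0 : v != 0).
Hypothesis strong_mono : forall xi1 xi2 (t : R), X xi1 -> X xi2 -> t < 0 ->
  dom xi1 t -> dom xi2 t -> cone_lt K xi1 xi2 -> cone_ll K (phi t xi1) (phi t xi2).
Hypothesis X_translate : forall xi (lambda : R), X xi -> X (xi + lambda *: v).
Hypothesis flow_translate : forall xi (lambda : R) (t : R), X xi -> dom xi t ->
  dom (xi + lambda *: v) t /\ phi t (xi + lambda *: v) = phi t xi + lambda *: v.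

Lemma flow_translate_dominates y1 y2 s b :
  X y1 -> X y2 -> s < 0 -> dom y1 s -> dom y2 s -> cone_le K (b *: v) (y1 - y2) ->
  phi s y1 - phi s y2 = b *: v \/ Vfun K v (phi s y1 - phi s y2) < b.
Proof.
move=> Xy1 Xy2 s_lt0 dom1 dom2 Kb.
have [domz phiz] := flow_translate b Xy2 dom2.
have [<-|z_neq] := eqVneq (y2 + b *: v) y1.
  by left; rewrite phiz addrAC subrr add0r.
right; apply: (Vfun_lt coneK Kv v_neq0).
have diffE x1 x2 : x2 + b *: v - x1 = b *: v - (x1 - x2).
  by rewrite opprB addrAC addrC.
rewrite -diffE -phiz.
apply: strong_mono => //; first exact: X_translate.
by split; [rewrite /cone_le diffE | exact/eqP].
Qed.

End ReversedTimeMonotone.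

Lemma enorm0 (R : realType) (n : nat) : enorm (0 : 'rV[R]_n) = 0.
Proof. by rewrite /enorm big1 ?sqrtr0 // => i _; rewrite mxE expr0n. Qed.

Theorem corollary1 (R : realType) (n : nat) (X : set 'rV[R]_n)
  (f : 'rV[R]_n -> 'rV[R]_n) (phi : R -> 'rV[R]_n -> 'rV[R]_n)
  (dom : 'rV[R]_n -> set R) (K : set 'rV[R]_n) (v : 'rV[R]_n) :
  closed X ->
  closure (interior X) = X ->
  locally_lipschitz_on X f ->
  forward_complete_flow X f phi dom ->
  closed_convex_cone K ->
  interior K !=set0 ->
  (forall xi1 xi2 (t : R), X xi1 -> X xi2 -> t < 0 -> dom xi1 t -> dom xi2 t ->
     cone_lt K xi1 xi2 -> cone_ll K (phi t xi1) (phi t xi2)) ->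
  (interior K) v ->
  enorm v = 1 ->
  (forall xi (lambda : R), X xi -> X (xi + lambda *: v)) ->
  (forall xi (lambda : R) (t : R), X xi -> dom xi t ->
     dom (xi + lambda *: v) t /\ phi t (xi + lambda *: v) = phi t xi + lambda *: v) ->
  forall xi1 xi2 (t : R), X xi1 -> X xi2 -> 0 < t ->
    Vfun K v (xi1 - xi2) <= Vfun K v (phi t xi1 - phi t xi2) /\
    ((~ exists lambda : R, xi1 - xi2 = lambda *: v) ->
       Vfun K v (xi1 - xi2) < Vfun K v (phi t xi1 - phi t xi2)).
Proof.
(* The hypotheses on [X] and [f] only serve to produce the flow, whose
   existence and uniqueness [forward_complete_flow] already provides. *)
move=> _ _ _ flow coneK _ strong_mono Kv norm_v X_translate flow_translate.
move=> xi1 xi2 t X1 X2 t_gt0.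
have v_neq0 : v != 0 by apply: contra_eq_neq norm_v => ->; rewrite enorm0 eq_sym oner_neq0.
have [Xy1 dom1 back1] := flow_reverse flow X1 (ltW t_gt0).
have [Xy2 dom2 back2] := flow_reverse flow X2 (ltW t_gt0).
have Kb := Vfun_mem coneK Kv v_neq0 (phi t xi1 - phi t xi2).
have mt_lt0 : - t < 0 by rewrite oppr_lt0.
have := flow_translate_dominates coneK Kv v_neq0 strong_mono X_translate
  flow_translate Xy1 Xy2 mt_lt0 dom1 dom2 Kb.
rewrite back1 back2 => -[diffE | lt_b].
- set b := Vfun K v _ in diffE *.
  rewrite diffE; split => [|no_span]; last by case: no_span; exists b.
  by apply: (Vfun_le coneK Kv v_neq0); rewrite /cone_le subrr; exact: cone0 coneK Kv.
- by split => //; apply: ltW.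
Qed.
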